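(* For $n\ge1$ and $0\le k\le n$: (a) the coefficients $b_{n,k}$ are integers; (b) $a_{n,k}\ge0$ and $b_{n,k}\ge0$; (c) $a_{n,k-1}\le a_{n,k}$ for $1\le k\le n$; (d) $a_{n,0}=(n-1)!$.
   Context: Let $V$ be the unique solution, in the ring of formal series $\sum_{n\ge0}q_n(y)x^{-n}$ with $q_n$ complex polynomials of degree $\le n$, of $V=1+\frac{y}{x}-\frac{1}{x}V-V_x-\frac{1}{x}V_y+\frac{1}{x}\log V$ (termwise formal derivatives $V_x,V_y$; formal logarithm series). Define polynomials $P_{n-1}$, $Q_n$ by $V=1+\sum_{n\ge1}P_{n-1}(y)x^{-n}$, $\log V=\sum_{n\ge1}Q_n(y)x^{-n}$; equivalently $P_0=y-1$ and $P_n=nP_{n-1}-P'_{n-1}+\frac1n\sum_{k=1}^{n-1}k\{(k-1)P_{k-1}-P_k-P'_{k-1}\}P_{n-k-1}$. For $n\ge1$ define $a_{n,k},b_{n,k}$ ($0\le k\le n$) by $P_n(y)=\frac{(-1)^{n+1}}{n!}\sum_{k=0}^n(-1)^ka_{n,k}y^{n-k}$ and $Q_n(y)=\frac{(-1)^{n+1}}{n!}\sum_{k=0}^n(-1)^kb_{n,k}y^{n-k}$. *)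

From mathcomp Require Import all_boot all_order all_algebra.
Set Implicit Arguments. Unset Strict Implicit. Unset Printing Implicit Defensive.
Import Order.TTheory GRing.Theory Num.Theory.
Local Open Scope ring_scope.

Definition Pstep (n : nat) (s : seq {poly rat}) : {poly rat} :=
  let P := fun i => nth 0 s i in
  n%:R *: P n.-1 - (P n.-1)^`()
  + (n%:R)^-1 *: \sum_(1 <= k < n)
      (k%:R *: ((k.-1)%:R *: P k.-1 - P k - (P k.-1)^`()) * P (n - k).-1).

Fixpoint Pseq (n : nat) : seq {poly rat} :=
  match n with
  | 0 => [:: 'X - 1]
  | m.+1 => rcons (Pseq m) (Pstep m.+1 (Pseq m))
  end.

Definition P (n : nat) : {poly rat} := nth 0 (Pseq n) n.

(* W = V - 1 = sum_{i>=0} P_i t^(i+1), t = 1/x, truncated at order n,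
   as a polynomial in t with coefficients in {poly rat} (polys in y). *)
Definition Wtrunc (n : nat) : {poly {poly rat}} :=
  \sum_(i < n) (P i)%:P * 'X^(i.+1).

(* Q_n = coefficient of t^n in log(1+W) = sum_{m>=1} (-1)^(m+1) W^m / m;
   only m <= n contribute to t^n. *)
Definition Q (n : nat) : {poly rat} :=
  (\sum_(1 <= m < n.+1)
     (((-1) ^+ m.+1 / m%:R : rat)%:P)%:P * Wtrunc n ^+ m)`_n.

(* P_n(y) = (-1)^(n+1)/n! sum_k (-1)^k a_{n,k} y^(n-k), likewise Q_n, b_{n,k}. *)
Definition a (n k : nat) : rat := (-1) ^+ (n.+1 + k) * n`!%:R * (P n)`_(n - k).
Definition b (n k : nat) : rat := (-1) ^+ (n.+1 + k) * n`!%:R * (Q n)`_(n - k).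

From mathcomp Require Import all_boot all_order all_algebra.
From mathcomp Require Import ring zify.
Import Order.TTheory GRing.Theory Num.Theory.
Local Open Scope ring_scope.

(* With t = 1/x, taking log V and differentiating, the equation for V says
   that V (t L_t) = t V_t and V L_y = V_y for L = log V, where, by the equation
   itself, the coefficients of L are Q_(n+1) = P_(n+1) - n P_n + P_n'.  Combining
   both identities gives (1 - t) L_y + t^2 L_t = t, i.e. P_(n+1)' = P_n' - n P_n,
   whence Q_(n+1) = P_(n+1) + P_(n+1)'.  In terms of A_n(y) = -n! P_n(-y) and
   B_n(y) = -n! Q_n(-y), whose coefficients are the a_(n,k) and b_(n,k), this reads
     B_(n+1) = A_(n+1) - A_(n+1)',   A_(n+1)' = n (n+1) A_n + (n+1) A_n',
   while the recurrence for P_n becomes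
     B_(j+1) = (j+1) A_j + sum_(i<j) C(j,i) (j-i) A_i B_(j-i).
   All coefficients are therefore natural numbers by induction, B_n >= 0 gives
   the monotonicity in k, and the top coefficient of A_n follows the
   factorial recursion. *)

Lemma mulrSnI (F : numFieldType) (V : lmodType F) (u w : V) n :
  u *+ n.+1 = w *+ n.+1 -> u = w.
Proof. by rewrite -!scaler_nat => /scalerI; apply; rewrite pnatr_eq0. Qed.

Lemma expN1_Sadd_sub (R : ringType) n k : (k <= n)%N ->
  (-1 : R) ^+ (n.+1 + k) = - (-1) ^+ (n - k).
Proof.
move=> le_kn; have -> : (n.+1 + k = (n - k) + (2 * k).+1)%N by lia.
by rewrite exprD exprS exprM sqrrN expr1n expr1n mulr1 mulrN1.
Qed.

Lemma coef_exprn_lt (R : ringType) (W : {poly R}) N k :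
  W`_0 = 0 -> (k < N)%N -> (W ^+ N)`_k = 0.
Proof.
move=> W0; elim: N k => // N IH k ltkN.
rewrite exprS coefM big1 // => -[[|l] lt_lk] _ /=; first by rewrite W0 mul0r.
by rewrite IH ?mulr0 //; lia.
Qed.

Lemma coef_comp_poly_opp (R : comRingType) (p : {poly R}) i :
  (p \Po - 'X)`_i = (-1) ^+ i * p`_i.
Proof.
elim/poly_ind: p i => [|p c IH] i; first by rewrite comp_poly0 !coef0 mulr0.
rewrite comp_polyD comp_polyM comp_polyX comp_polyC mulrN !coefD coefN !coefMX !coefC.
by case: i => [|i] /=; rewrite ?IH ?exprS ?mulN1r ?mulNr ?oppr0 ?add0r ?addr0 ?expr0 ?mul1r.
Qed.

Lemma deriv_comp_opp (R : comRingType) (p : {poly R}) :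
  (p \Po - 'X)^`() = - (p^`() \Po - 'X).
Proof. by rewrite deriv_comp derivN derivX mulrN1. Qed.

Section NatPoly.
Variable R : archiNumDomainType.

Definition natpoly (p : {poly R}) := forall i, p`_i \is a Num.nat.

Lemma natpolyD p q : natpoly p -> natpoly q -> natpoly (p + q).
Proof. by move=> Np Nq i; rewrite coefD rpredD. Qed.

Lemma natpolyMn p n : natpoly p -> natpoly (p *+ n).
Proof. by move=> Np i; rewrite coefMn rpredMn. Qed.

Lemma natpolyM p q : natpoly p -> natpoly q -> natpoly (p * q).
Proof. by move=> Np Nq i; rewrite coefM rpred_sum // => j _; rewrite rpredM. Qed.

Lemma natpoly_deriv p : natpoly p -> natpoly p^`().
Proof. by move=> Np i; rewrite coef_deriv rpredMn. Qed.

End NatPoly.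

Arguments natpoly {R} p.

Section Convolution.
Variables (R : ringType) (v : nat -> R).

(* [%N] matters: with [i : 'I_j.+1], ring-scope [j - i] would subtract in 'Z_(j+1). *)
Definition conv (F : nat -> R) (j : nat) : R := \sum_(i < j.+1) v i * F (j - i)%N.

Lemma convD F G j : conv (fun k => F k + G k) j = conv F j + conv G j.
Proof. by rewrite /conv -big_split; apply: eq_bigr => i _; rewrite mulrDr. Qed.

Lemma convB F G j : conv (fun k => F k - G k) j = conv F j - conv G j.
Proof. by rewrite /conv -sumrB; apply: eq_bigr => i _; rewrite mulrBr. Qed.

Lemma conv_shift F j : conv F j.+1 = conv (fun k => F k.+1) j + v j.+1 * F 0.
Proof.
rewrite /conv big_ord_recr /= subnn; congr (_ + _).
by apply: eq_bigr => i _; rewrite subSn // -ltnS.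
Qed.

Hypothesis v0 : v 0 = 1.

Lemma conv_inj F G N : (forall j, (j < N)%N -> conv F j = conv G j) ->
  forall j, (j < N)%N -> F j = G j.
Proof.
move=> eqFG; elim/ltn_ind=> j IH ltjN.
have := eqFG j ltjN; rewrite /conv !big_ord_recl v0 !mul1r subn0.
suff -> : \sum_(i < j) v (bump 0 i) * F (j - bump 0 i)%N
        = \sum_(i < j) v (bump 0 i) * G (j - bump 0 i)%N by move/addIr.
apply: eq_bigr => i _; rewrite IH //; have := ltn_ord i; rewrite /bump /=; lia.
Qed.

End Convolution.

Arguments conv {R} v F j.

Lemma size_Pseq m : size (Pseq m) = m.+1.
Proof. by elim: m => //= m IH; rewrite size_rcons IH. Qed.

Lemma nth_Pseq m i : (i <= m)%N -> nth 0 (Pseq m) i = P i.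
Proof.
rewrite /P; elim: m => [|m IH] /=; first by rewrite leqn0 => /eqP ->.
rewrite leq_eqVlt => /orP[/eqP->//|him].
by rewrite nth_rcons size_Pseq him IH.
Qed.

Lemma P_rec n : P n.+1 = n.+1%:R *: P n - (P n)^`()
  + (n.+1%:R)^-1 *: \sum_(1 <= k < n.+1)
      (k%:R *: ((k.-1)%:R *: P k.-1 - P k - (P k.-1)^`()) * P (n - k)).
Proof.
rewrite {1}/P /= nth_rcons size_Pseq ltnn eqxx /Pstep /= nth_Pseq //.
congr (_ + _ *: _); apply: eq_big_nat => k /andP[k1 kn].
by rewrite !nth_Pseq // ?subSKn //; lia.
Qed.

Lemma P0 : P 0 = 'X - 1.
Proof. by []. Qed.

Lemma P1 : P 1 = 'X - 2%:R.
Proof.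
rewrite P_rec big_geq // scaler0 addr0 scale1r P0 derivB derivX derivC subr0.
by rewrite -addrA -opprD.
Qed.

(* Coefficient of t^i in V = 1 + sum_i P_i t^(i+1), where t = 1/x. *)
Definition Vcoef (i : nat) : {poly rat} := if i is i'.+1 then P i' else 1.

(* The coefficients of log V forced by the differential equation: comparing
   coefficients of t^(k+2) in t log V = V - 1 - y t + t V - t^2 V_t + t V_y. *)
Definition Q_ode (k : nat) : {poly rat} :=
  if k is k'.+1 then P k'.+1 - k'%:R *: P k' + (P k')^`() else 0.

(* The recurrence for P_n is the coefficient form of V (t log V)_t = t V_t. *)
Lemma conv_Q_ode_t j :
  conv Vcoef (fun k => Q_ode k.+1 *+ k.+1) j = P j *+ j.+1.
Proof.
set S := \sum_(1 <= k < j.+1)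
  (k%:R *: ((k.-1)%:R *: P k.-1 - P k - (P k.-1)^`()) * P (j - k)).
have tailE : \sum_(i < j) Vcoef (bump 0 i) * (Q_ode (j - bump 0 i).+1 *+ (j - bump 0 i).+1)
    = - S.
  rewrite /S big_add1 /= big_nat_rev /= big_mkord -sumrN.
  apply: eq_bigr => i _; rewrite /bump /=.
  have -> : (j - (j - i.+1).+1 = i)%N by have := ltn_ord i; lia.
  rewrite mulrC -mulNr; congr (_ * _).
  by rewrite !scaler_nat; ring.
rewrite /conv big_ord_recl tailE subn0 /= mul1r P_rec -/S.
set T := _^-1 *: S.
have <- : T *+ j.+1 = S.
  by rewrite -scaler_nat scalerA mulfV ?scale1r // pnatr_eq0.
by rewrite !scaler_nat; ring.
Qed.

Definition log1p_trunc (W : {poly {poly rat}}) (N : nat) : {poly {poly rat}} :=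
  \sum_(1 <= m < N.+1) (((-1) ^+ m.+1 / m%:R : rat)%:P)%:P * W ^+ m.

Lemma Q_log1p_trunc n : Q n = (log1p_trunc (Wtrunc n) n)`_n.
Proof. by []. Qed.

Section Derivation.
Variable d : {poly {poly rat}} -> {poly {poly rat}}.
Hypothesis dD : {morph d : x y / x + y}.
Hypothesis dM : forall x y, d (x * y) = d x * y + x * d y.
Hypothesis dC : forall r : rat, d r%:P%:P = 0.

Lemma derivation_exp (W : {poly {poly rat}}) m : d (W ^+ m.+1) = W ^+ m * d W *+ m.+1.
Proof.
elim: m => [|m IH]; first by rewrite expr1 expr0 mul1r.
by rewrite exprS dM IH [RHS]mulrS mulrC mulrnAr mulrA -exprS.
Qed.

Lemma derivation_log1p_trunc (W : {poly {poly rat}}) N :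
  (1 + W) * d (log1p_trunc W N) = d W * (1 - (-W) ^+ N).
Proof.
elim: N => [|N IH].
  by rewrite /log1p_trunc big_geq // -polyC0 -polyC0 dC mulr0 expr0 subrr mulr0.
rewrite /log1p_trunc big_nat_recr //= -/(log1p_trunc W N) dD dM dC mul0r add0r.
have cancel_m : (-1) ^+ N.+2 / N.+1%:R *+ N.+1 = (-1) ^+ N.+2 :> rat.
  by rewrite -mulr_natr divfK // pnatr_eq0.
rewrite derivation_exp mulrnAr -mulrnAl -!polyCMn cancel_m.
rewrite !rmorphXn !rmorphN1 mulrDr IH !(exprNn W) !exprS.
ring.
Qed.

Lemma coef_derivation_log1p_trunc (W : {poly {poly rat}}) N j :
  W`_0 = 0 -> (j < N)%N -> ((1 + W) * d (log1p_trunc W N))`_j = (d W)`_j.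
Proof.
move=> W0 ltjN; rewrite derivation_log1p_trunc mulrBr mulr1 coefB.
suff -> : (d W * (- W) ^+ N)`_j = 0 by rewrite subr0.
rewrite coefM big1 // => -[i lt_ij] _ /=.
by rewrite coef_exprn_lt ?coefN ?W0 ?oppr0 ?mulr0 //; lia.
Qed.

End Derivation.

Lemma coef_Wtrunc N i : (Wtrunc N)`_i = if (0 < i <= N)%N then P i.-1 else 0.
Proof.
elim: N => [|N IH]; first by rewrite /Wtrunc big_ord0 coef0; case: i => [|[]].
rewrite /Wtrunc big_ord_recr /= -/(Wtrunc N) coefD IH coefCM coefXn {IH}.
case: i => [|i] /=; first by rewrite mulr0 addr0.
by rewrite eqSS ltnS; case: ltngtP => [_|_|->]; rewrite ?mulr0 ?addr0 ?mulr1 ?add0r.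
Qed.

Lemma coef_1Wtrunc_mul N X j : (j <= N)%N ->
  ((1 + Wtrunc N) * X)`_j = conv Vcoef (fun k => X`_k) j.
Proof.
move=> le_jN; rewrite coefM; apply: eq_bigr => -[i /= lt_ij] _.
rewrite coefD coef1 coef_Wtrunc; case: i lt_ij => [|i] lt_ij /=; first by rewrite addr0.
by rewrite add0r ifT //; lia.
Qed.

Definition deriv_y (p : {poly {poly rat}}) : {poly {poly rat}} := map_poly (@deriv rat) p.

Lemma coef_deriv_y p i : (deriv_y p)`_i = (p`_i)^`().
Proof. by rewrite coef_map. Qed.

Lemma deriv_yD : {morph deriv_y : p q / p + q}.
Proof. by move=> p q; apply/polyP => i; rewrite coefD !coef_deriv_y coefD derivD. Qed.

Lemma deriv_yM p q : deriv_y (p * q) = deriv_y p * q + p * deriv_y q.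
Proof.
apply/polyP => i; rewrite coefD !coef_deriv_y !coefM -big_split raddf_sum.
by apply: eq_bigr => j _; rewrite !coef_deriv_y; exact: derivM.
Qed.

Lemma deriv_yC (r : rat) : deriv_y r%:P%:P = 0.
Proof. by apply/polyP => i; rewrite coef_deriv_y !coefC; case: eqP; rewrite ?derivC. Qed.

Lemma coef_log1p_Wtrunc_0 N : (log1p_trunc (Wtrunc N) N)`_0 = 0.
Proof.
rewrite coef_sum big_nat big1 // => m /andP[m_gt0 _].
by rewrite coefCM coef_exprn_lt ?coef_Wtrunc ?mulr0.
Qed.

(* Both sides satisfy the t-derivative identity, and convolution with V is injective. *)
Lemma coef_log1p_Wtrunc N k : (k <= N)%N ->
  (log1p_trunc (Wtrunc N) N)`_k = Q_ode k.
Proof.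
case: k => [|k] ltkN; first exact: coef_log1p_Wtrunc_0.
apply: (@mulrSnI _ _ _ _ k); move: k ltkN; apply: (@conv_inj _ Vcoef) => // j ltjN.
transitivity (((1 + Wtrunc N) * (log1p_trunc (Wtrunc N) N)^`())`_j).
  by rewrite coef_1Wtrunc_mul 1?ltnW //; apply: eq_bigr => i _; rewrite coef_deriv.
rewrite conv_Q_ode_t coef_derivation_log1p_trunc ?coef_Wtrunc //=.
- by rewrite coef_deriv coef_Wtrunc ltjN.
- exact: derivD.
- exact: derivM.
- by move=> r; rewrite derivC.
Qed.

Lemma QE n : Q n = Q_ode n.
Proof. by rewrite Q_log1p_trunc coef_log1p_Wtrunc. Qed.

(* Coefficient form of V (log V)_y = V_y. *)
Lemma conv_Q_ode_y j : conv Vcoef (fun k => (Q_ode k)^`()) j = (Vcoef j)^`().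
Proof.
transitivity (((1 + Wtrunc j.+1) * deriv_y (log1p_trunc (Wtrunc j.+1) j.+1))`_j).
  rewrite coef_1Wtrunc_mul //; apply: eq_bigr => -[i /= lt_ij] _.
  by rewrite coef_deriv_y coef_log1p_Wtrunc //; lia.
rewrite coef_derivation_log1p_trunc ?coef_Wtrunc //.
- by rewrite coef_deriv_y coef_Wtrunc; case: j => [|j] /=; rewrite ?deriv0 ?derivC ?leqnSn.
- exact: deriv_yD.
- exact: deriv_yM.
- exact: deriv_yC.
Qed.

(* Coefficient of t^(n+2) in (1 - t) V_y + t^2 V_t - t V. *)
Definition Pdefect (n : nat) : {poly rat} := (P n.+1)^`() - (P n)^`() + P n *+ n.

(* Coefficient of t^(k+2) in (1 - t) L_y + t^2 L_t - t, with Q_ode in place of L = log V. *)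
Definition Q_ode_defect (k : nat) : {poly rat} :=
  (Q_ode k.+2)^`() - (Q_ode k.+1)^`() + Q_ode k.+1 *+ k.+1.

Lemma conv_Q_ode_defect n : conv Vcoef Q_ode_defect n = Pdefect n.
Proof.
have dQ_ode1 : (Q_ode 1)^`() = 1.
  by rewrite /= P1 P0 !derivE scale0r; ring.
have Y2 := conv_Q_ode_y n.+2; have Y1 := conv_Q_ode_y n.+1.
rewrite !conv_shift [Q_ode 0]/= deriv0 !mulr0 !addr0 dQ_ode1 mulr1 in Y2 Y1.
move/(canRL (addrK _)): Y2 => Y2.
by rewrite /Q_ode_defect convD convB conv_Q_ode_t Y2 Y1 /Pdefect /= mulrS; ring.
Qed.

Lemma Q_ode_defectE n : Pdefect n = 0 -> Q_ode_defect n = Pdefect n.+1.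
Proof.
move=> defect_n.
have dPn : (P n)^`() = (P n.+1)^`() + P n *+ n.
  by rewrite -[LHS]addr0 -defect_n /Pdefect; ring.
rewrite /Q_ode_defect /Pdefect /= !derivE !scaler_nat dPn !derivE dPn; ring.
Qed.

Lemma Pdefect_eq0 n : Pdefect n = 0.
Proof.
elim/ltn_ind: n => -[|n] IH.
  by rewrite /Pdefect P1 P0 !derivE mulr0n; ring.
have := conv_Q_ode_defect n; rewrite IH // /conv big_ord_recl big1 => [|i _].
  by rewrite subn0 [Vcoef _]/= mul1r addr0 (Q_ode_defectE _ (IH n (ltnSn n))).
by rewrite Q_ode_defectE ?IH ?mulr0 //=; have := ltn_ord i; rewrite /bump /=; lia.
Qed.

Lemma deriv_PS n : (P n.+1)^`() = (P n)^`() - P n *+ n.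
Proof. by rewrite -[LHS]subr0 -(Pdefect_eq0 n) /Pdefect; ring. Qed.

Lemma QS n : Q n.+1 = P n.+1 + (P n.+1)^`().
Proof. by rewrite QE /= deriv_PS scaler_nat; ring. Qed.

(* a_{n,k} and b_{n,k} are the coefficients of y^(n-k) in these polynomials. *)
Definition Apoly (n : nat) : {poly rat} := - (n`!%:R) *: (P n \Po - 'X).
Definition Bpoly (n : nat) : {poly rat} := - (n`!%:R) *: (Q n \Po - 'X).

Lemma Bpoly_Apoly n : Bpoly n.+1 = Apoly n.+1 - (Apoly n.+1)^`().
Proof.
by rewrite /Bpoly /Apoly QS comp_polyD derivZ deriv_comp_opp scalerN scalerDr opprK.
Qed.

Lemma deriv_Apoly n : (Apoly n.+1)^`() = Apoly n *+ (n.+1 * n) + (Apoly n)^`() *+ n.+1.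
Proof.
rewrite /Apoly !derivZ !deriv_comp_opp deriv_PS -scaler_nat comp_polyB comp_polyZ.
rewrite factS -!scaler_nat -!mul_polyC !polyCN !natrM !polyCM -!natr1 !polyCD.
ring.
Qed.

Lemma Bpoly_rec j : Bpoly j.+1 = Apoly j *+ j.+1
  + \sum_(i < j) (Apoly i * Bpoly (j - i)) *+ ((j - i) * 'C(j, i)).
Proof.
have tailE : \sum_(i < j) Vcoef (bump 0 i) * (Q_ode (j - bump 0 i).+1 *+ (j - bump 0 i).+1)
    = \sum_(i < j) P i * (Q (j - i) *+ (j - i)).
  apply: eq_bigr => i _; rewrite QE (_ : bump 0 i = i.+1) //.
  by have -> : (j - i.+1).+1 = (j - i)%N by have := ltn_ord i; lia.
have := conv_Q_ode_t j; rewrite /conv big_ord_recl subn0 [Vcoef _]/= mul1r tailE.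
rewrite -QE => /(canRL (addrK _)) Qj.
have -> : Bpoly j.+1 = - (j`!%:R) *: ((Q j.+1 *+ j.+1) \Po - 'X).
  by rewrite /Bpoly -scaler_nat comp_polyZ scalerA factS natrM mulNr mulrC.
rewrite Qj comp_polyB scalerBr; congr (_ + _).
  by rewrite /Apoly -!scaler_nat comp_polyZ !scalerA mulrC.
rewrite raddf_sum -scalerN -sumrN scaler_sumr; apply: eq_bigr => i _.
rewrite /Apoly /Bpoly /= comp_polyM -!scaler_nat comp_polyZ.
rewrite -(bin_fact (ltnW (ltn_ord i))).
rewrite -!mul_polyC !polyCN !natrM !polyCM; ring.
Qed.

Lemma Apoly0 : Apoly 0 = 'X + 1.
Proof. by rewrite /Apoly P0 comp_polyB comp_polyX comp_polyC scaleN1r; ring. Qed.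

Lemma natpoly_Apoly_Bpoly n : natpoly (Apoly n) /\ natpoly (Bpoly n.+1).
Proof.
elim/ltn_ind: n => n IH.
have An : natpoly (Apoly n).
  case: n IH => [_ [|[|i]]|n IH]; rewrite ?Apoly0 ?coefD ?coefX ?coefC //.
  have [An Bn] := IH n (ltnSn n).
  rewrite -[Apoly _](subrK (Apoly n.+1)^`()) -Bpoly_Apoly deriv_Apoly.
  by apply: natpolyD => //; apply: natpolyD; apply: natpolyMn => //; apply: natpoly_deriv.
split=> //; rewrite Bpoly_rec; apply: natpolyD; first exact: natpolyMn.
move=> j; rewrite coef_sum rpred_sum // => -[i lt_in] _.
rewrite coefMn rpredMn //; apply: natpolyM; first exact: (IH i lt_in).1.
have -> : (n - i = (n - i.+1).+1)%N by lia.
by apply: (IH _ _).2; lia.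
Qed.

Lemma coef_Apoly_rec n i : (Apoly n.+1)`_i.+1 *+ i.+1
  = (Apoly n)`_i *+ (n.+1 * n) + (Apoly n)`_i.+1 *+ i.+1 *+ n.+1.
Proof. by rewrite -coef_deriv deriv_Apoly coefD !coefMn coef_deriv. Qed.

Lemma coef_Apoly_gt n i : (maxn 1 n < i)%N -> (Apoly n)`_i = 0.
Proof.
elim: n i => [|n IH] [|i] // lt_i.
  by rewrite Apoly0 coefD coefX coefC; case: i lt_i => [|[]].
apply: (@mulrSnI _ rat^o _ _ i).
rewrite coef_Apoly_rec mul0rn (IH i.+1) ?mul0rn ?addr0; last by lia.
have [->|n_gt0] := posnP n; first by rewrite muln0 mulr0n.
by rewrite IH ?mul0rn //; lia.
Qed.

Lemma coef_Apoly_lead n : (Apoly n.+1)`_n.+1 = n`!%:R.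
Proof.
elim: n => [|n IH].
  apply: (@mulrSnI _ rat^o _ _ 0).
  by rewrite coef_Apoly_rec Apoly0 !coefD !coefX !coef1 /= muln0 mulr0n add0r !addr0.
apply: (@mulrSnI _ rat^o _ _ n.+1).
rewrite coef_Apoly_rec IH (@coef_Apoly_gt n.+1 n.+2) ?mul0rn ?addr0; last by lia.
by rewrite mulnC factS natrM mulr_natl mulrnA.
Qed.

(* B_n = A_n - A_n' with nonnegative coefficients is what makes k |-> a_{n,k} monotone. *)
Lemma coef_Apoly_antitone n j : (Apoly n.+1)`_j.+1 <= (Apoly n.+1)`_j.
Proof.
have := (natpoly_Apoly_Bpoly n).2 j; rewrite Bpoly_Apoly coefB coef_deriv.
move/natr_ge0; rewrite subr_ge0; apply: le_trans.
by rewrite mulrS lerDl mulrn_wge0 // natr_ge0 // (natpoly_Apoly_Bpoly _).1.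
Qed.

Lemma a_Apoly n k : (k <= n)%N -> a n k = (Apoly n)`_(n - k).
Proof.
by move=> le_kn; rewrite /a /Apoly coefZ coef_comp_poly_opp expN1_Sadd_sub // !mulNr mulrCA mulrA.
Qed.

Lemma b_Bpoly n k : (k <= n)%N -> b n k = (Bpoly n)`_(n - k).
Proof.
by move=> le_kn; rewrite /b /Bpoly coefZ coef_comp_poly_opp expN1_Sadd_sub // !mulNr mulrCA mulrA.
Qed.

Theorem theorem4p10 (n k : nat) :
  (1 <= n)%N -> (k <= n)%N ->
  [/\ b n k \is a Num.int,
      0 <= a n k /\ 0 <= b n k,
      (1 <= k)%N -> a n k.-1 <= a n k
    & a n 0 = (n.-1)`!%:R].
Proof.
case: n => // n _ le_kn.
have A_nat := (natpoly_Apoly_Bpoly n.+1).1; have B_nat := (natpoly_Apoly_Bpoly n).2.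
have b_nat : b n.+1 k \is a Num.nat by rewrite b_Bpoly.
split.
- by move: b_nat; rewrite natrEint => /andP[].
- by split; apply: natr_ge0; rewrite // a_Apoly.
- move=> k_gt0; rewrite !a_Apoly ?(leq_trans (leq_pred k)) //.
  have -> : (n.+1 - k.-1 = (n.+1 - k).+1)%N by lia.
  exact: coef_Apoly_antitone.
- by rewrite a_Apoly // subn0 coef_Apoly_lead.
Qed.
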